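(* Let $k\ge 0$ be an integer and let $G$ be a graph with $m$ edges, where $m\ge\max\{(k^2+2k+2)^2+k+1,\,(2k+3)^2+k+1\}$. If $\rho(G)\ge\sqrt{m-k}$, then $G$ contains $K_{1,m-k}$ as a subgraph or $G$ contains $C_4$ as a subgraph.
   Context: All graphs are finite, simple and undirected. $\rho(G)$ denotes the spectral radius (largest eigenvalue) of the adjacency matrix $A(G)$ of $G$. $K_{1,t}$ denotes the star with $t$ edges (on $t+1$ vertices) and $C_4$ the cycle on $4$ vertices. ''Contains as a subgraph'' means not necessarily induced. *)

From HB Require Import structures.
From mathcomp Require Import all_boot all_order all_algebra.
From mathcomp Require Import reals.
Set Implicit Arguments. Unset Strict Implicit. Unset Printing Implicit Defensive.
Import Order.TTheory GRing.Theory Num.Theory.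
Local Open Scope ring_scope.

Definition simple_graph (n : nat) (E : {set {set 'I_n}}) : Prop :=
  forall s, s \in E -> #|s| = 2%N.

Definition adj (n : nat) (E : {set {set 'I_n}}) (x y : 'I_n) : bool :=
  (x != y) && ([set x; y] \in E).

Definition adjmx (R : realType) (n : nat) (E : {set {set 'I_n}}) : 'M[R]_n :=
  \matrix_(i, j) (adj E i j)%:R.

Definition is_spectral_radius (R : realType) (n : nat) (A : 'M[R]_n) (r : R) : Prop :=
  eigenvalue A r /\ forall l, eigenvalue A l -> l <= r.

Definition contains_star (n : nat) (E : {set {set 'I_n}}) (t : nat) : Prop :=
  exists (c : 'I_n) (f : 'I_t -> 'I_n),
    injective f /\ forall i, f i != c /\ adj E c (f i).

Definition contains_C4 (n : nat) (E : {set {set 'I_n}}) : Prop :=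
  exists a b c d : 'I_n,
    [/\ uniq [:: a; b; c; d], adj E a b, adj E b c, adj E c d & adj E d a].

From mathcomp Require Import all_boot all_order all_algebra.
From mathcomp Require Import reals.
From mathcomp Require Import ring lra.
From Stdlib Require Import Classical_Prop.
Set Implicit Arguments.
Unset Strict Implicit.
Unset Printing Implicit Defensive.
Import Order.TTheory GRing.Theory Num.Theory.

(* Normalise the absolute values of an eigenvector for rho to a vector y with
   0 <= y <= 1, y_u = 1 and rho y <= y A.  Counting walks of length two from u
   gives rho^2 <= d(u) + w, where w = sum_(z != u) c(z) y_z and c(z) is the
   number of common neighbours of u and z; without a C4 every c(z) is 0 or 1,
   and one more application of A then yields rho w <= 2 (m - d(u)) + w.  Hence
   (rho - 1)(rho^2 - d(u)) <= 2 (m - d(u)), which together with rho^2 >= m - k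
   and rho > 2k + 3 forces d(u) >= m - k.  Only the second term of the maximum
   in the hypothesis on m is needed, to get rho > 2k + 3. *)

Definition degree n (E : {set {set 'I_n}}) (x : 'I_n) : nat :=
  #|[set y | adj E x y]|.

Section SimpleGraph.
Variables (n : nat) (E : {set {set 'I_n}}).

Lemma adj_sym x y : adj E x y = adj E y x.
Proof. by rewrite /adj eq_sym setUC. Qed.

Lemma adj_irr x : adj E x x = false.
Proof. by rewrite /adj eqxx. Qed.

Lemma contains_star_degree x t : (t <= degree E x)%N -> contains_star E t.
Proof.
move=> le_t_deg; exists x, (fun i => enum_val (widen_ord le_t_deg i)); split.
  by move=> i j /enum_val_inj /(congr1 val) /= ij; apply: val_inj.
move=> i; have := enum_valP (widen_ord le_t_deg i); rewrite inE => xi.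
by split=> //; move: (xi) => /andP[+ _]; rewrite eq_sym.
Qed.

Lemma C4free_codegree_le1 x z : ~ contains_C4 E -> x != z ->
  (#|[set w | adj E x w && adj E w z]| <= 1)%N.
Proof.
move=> noC4 xz; apply/card_le1_eqP => w1 w2.
rewrite !inE => /andP[xw1 w1z] /andP[xw2 w2z].
have [// | w12] := eqVneq w1 w2; case: noC4; exists x, w1, z, w2.
move: (xw1) (w1z) (xw2) (w2z) => /andP[xw1' _] /andP[w1z' _] /andP[xw2' _] /andP[w2z' _].
split=> //; rewrite 1?adj_sym //=.
by rewrite !inE !negb_or xw1' xw2' xz w1z' w12 (eq_sym z) w2z'.
Qed.

Hypothesis simpleE : simple_graph E.

Lemma card_edges_at x : #|[set e in E | x \in e]| = degree E x.
Proof.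
have -> : [set e in E | x \in e] = [set [set x; y] | y in [set y | adj E x y]].
  apply/setP => e; rewrite !inE; apply/andP/imsetP => [[eE xe] | [y]].
    have /cards2P[a [b [ab def_e]]] : #|e| == 2 by rewrite simpleE.
    move: xe eE; rewrite def_e !inE => /orP[] /eqP-> eE.
      by exists b; rewrite // inE /adj ab.
    by exists a; rewrite 1?setUC // inE /adj eq_sym ab setUC.
  by rewrite inE => /andP[_ xyE] ->; rewrite xyE !inE eqxx.
rewrite card_in_imset // => y1 y2; rewrite !inE => /andP[xy1 _] /andP[xy2 _] eq12.
have : y1 \in [set x; y2] by rewrite -eq12 !inE eqxx orbT.
by rewrite !inE eq_sym (negbTE xy1) => /eqP.
Qed.

Lemma handshake : (\sum_x degree E x = 2 * #|E|)%N.
Proof.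
under eq_bigr do rewrite -card_edges_at -sum1_card big_mkcond /=.
rewrite exchange_big /= -sum1_card big_distrr [RHS]big_mkcond /=.
apply: eq_bigr => e _; case: (boolP (e \in E)) => [eE | eNE].
  rewrite muln1 -(simpleE eE) -sum1_card [RHS]big_mkcond /=.
  by apply: eq_bigr => x _; rewrite inE eE.
by apply: big1 => x _; rewrite inE (negbTE eNE).
Qed.

End SimpleGraph.

Local Open Scope ring_scope.

Lemma nonneg_eigenvalue_subinvariant (R : realFieldType) n (A : 'M[R]_n) r :
  (forall i j, 0 <= A i j) -> 0 <= r -> eigenvalue A r ->
  exists (y : 'I_n -> R) (u : 'I_n),
    [/\ forall i, 0 <= y i <= 1, y u = 1 & forall j, r * y j <= \sum_i y i * A i j].
Proof.
move=> A_ge0 r_ge0 /eigenvalueP[v vA v_neq0].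
pose F i := `|v 0 i|.
have [i0 vi0] : exists i, v 0 i != 0.
  apply/existsP; apply: contraR v_neq0 => /existsPn v0.
  by apply/eqP/rowP => i; rewrite mxE; apply/eqP/negPn/v0.
have [u _ Fu_max] := @arg_maxP _ R _ i0 xpredT F isT.
have Fu_gt0 : 0 < F u by apply: lt_le_trans (Fu_max i0 isT); rewrite normr_gt0.
have F_subinv j : r * F j <= \sum_i F i * A i j.
  have := congr1 (fun w : 'rV_n => w 0 j) vA; rewrite /= !mxE => vAj.
  rewrite /F -(ger0_norm r_ge0) -normrM -vAj.
  apply: le_trans (ler_norm_sum _ _ _) _; apply: ler_sum => i _.
  by rewrite normrM (ger0_norm (A_ge0 _ _)).
exists (fun i => F i / F u), u; split.
- move=> i; rewrite divr_ge0 ?normr_ge0 ?(ltW Fu_gt0) //=.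
  by rewrite ler_pdivrMr // mul1r; apply: Fu_max.
- by rewrite divff // gt_eqF.
- move=> j; rewrite mulrA (eq_bigr (fun i => F i * A i j / F u)) -?mulr_suml.
    by rewrite ler_pM2r ?invr_gt0 ?F_subinv.
  by move=> i _; rewrite mulrAC.
Qed.

Lemma sum_bool_natr (R : pzSemiRingType) (T : finType) (b : pred T) :
  \sum_t (b t)%:R = #|[set t | b t]|%:R :> R.
Proof.
rewrite -sum1dep_card natr_sum [RHS]big_mkcond /=.
by apply: eq_bigr => t _; case: (b t).
Qed.

Section C4FreeWalks.
Variables (R : realType) (n : nat) (E : {set {set 'I_n}}).
Let A := adjmx R E.

Lemma adjmx01 i j : A i j = 0 \/ A i j = 1.
Proof. by rewrite mxE; case: adj; [right | left]. Qed.

Lemma adjmx_ge0 i j : 0 <= A i j.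
Proof. by case: (adjmx01 i j) => ->. Qed.

Lemma adjmx_le1 i j : A i j <= 1.
Proof. by case: (adjmx01 i j) => ->. Qed.

Lemma adjmx_sym i j : A i j = A j i.
Proof. by rewrite !mxE adj_sym. Qed.

Lemma adjmx_diag i : A i i = 0.
Proof. by rewrite mxE adj_irr. Qed.

Lemma sum_adjmx_row i : \sum_j A i j = (degree E i)%:R.
Proof. by rewrite -sum_bool_natr; apply: eq_bigr => j _; rewrite mxE. Qed.

Hypothesis simpleE : simple_graph E.

Lemma sum_adjmx : \sum_i \sum_j A i j = 2 * #|E|%:R.
Proof.
under eq_bigr do rewrite sum_adjmx_row.
by rewrite -natr_sum handshake // natrM.
Qed.

Hypothesis noC4 : ~ contains_C4 E.
Variables (y : 'I_n -> R) (u : 'I_n) (rho : R).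
Hypotheses (y_bound : forall i, 0 <= y i <= 1) (yu : y u = 1) (rho_ge1 : 1 <= rho).
Hypothesis y_subinv : forall j, rho * y j <= \sum_i y i * A i j.

Let y_ge0 i : 0 <= y i. Proof. by case/andP: (y_bound i). Qed.
Let y_le1 i : y i <= 1. Proof. by case/andP: (y_bound i). Qed.

Let d := \sum_t A u t.
Let codeg z := \sum_w A u w * A w z.
Let weight := \sum_(z | z != u) codeg z * y z.

Lemma y_subinv_row j : rho * y j <= \sum_i A j i * y i.
Proof. by under eq_bigr do rewrite adjmx_sym mulrC; apply: y_subinv. Qed.

Lemma codeg_ge0 z : 0 <= codeg z.
Proof. by apply: sumr_ge0 => w _; rewrite mulr_ge0 ?adjmx_ge0. Qed.

Lemma codeg01 z : z != u -> codeg z = 0 \/ codeg z = 1.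
Proof.
move=> zu; have -> : codeg z = #|[set w | adj E u w && adj E w z]|%:R.
  by rewrite -sum_bool_natr; apply: eq_bigr => w _; rewrite !mxE -natrM mulnb.
have : (#|[set w | adj E u w && adj E w z]| <= 1)%N.
  by apply: C4free_codegree_le1; rewrite // eq_sym.
by case: #|_| => [|[|]] // _; [left | right].
Qed.

Lemma codeg_self : codeg u = d.
Proof.
apply: eq_bigr => w _; rewrite (adjmx_sym w u).
by case: (adjmx01 u w) => ->; rewrite ?mulr0 ?mulr1.
Qed.

Lemma sqr_rho_le : rho ^+ 2 <= d + weight.
Proof.
have rho_ge0 : 0 <= rho by apply: le_trans rho_ge1.
have -> : rho ^+ 2 = rho * (rho * y u) by rewrite yu mulr1 expr2.
apply: (le_trans (ler_wpM2l rho_ge0 (y_subinv_row u))); rewrite mulr_sumr.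
apply: (@le_trans _ _ (\sum_i A u i * \sum_z A i z * y z)).
  by apply: ler_sum => i _; rewrite mulrCA ler_wpM2l ?adjmx_ge0 ?y_subinv_row.
have -> : \sum_i A u i * \sum_z A i z * y z = \sum_z codeg z * y z.
  under eq_bigr do rewrite mulr_sumr.
  rewrite exchange_big; apply: eq_bigr => z _; rewrite mulr_suml.
  by apply: eq_bigr => i _; rewrite mulrA.
by rewrite (bigD1 u) //= yu mulr1 codeg_self.
Qed.

Let deg_avoid z := \sum_(t | t != u) A z t.
Let common_weight z := \sum_t A u t * A z t * y t.

Lemma common_weight_le_codeg z : common_weight z <= codeg z.
Proof.
apply: ler_sum => t _; rewrite (adjmx_sym z t) ler_piMr ?y_le1 //.
by rewrite mulr_ge0 ?adjmx_ge0.
Qed.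

Lemma row_weight_le z :
  \sum_t A z t * y t <= common_weight z + (\sum_t A z t - codeg z).
Proof.
rewrite -lerBlDl -!sumrB; apply: ler_sum => t _.
rewrite (adjmx_sym t z) (mulrC (A u t)).
have : 0 <= A z t * (1 - A u t) * (1 - y t).
  by rewrite !mulr_ge0 ?adjmx_ge0 ?subr_ge0 ?adjmx_le1 ?y_le1.
lra.
Qed.

Lemma codeg_row_weight_le z : z != u ->
  codeg z * \sum_t A z t * y t <= deg_avoid z + A u z * common_weight z.
Proof.
move=> zu; have := row_weight_le z; have := common_weight_le_codeg z.
have deg_avoid_ge0 : 0 <= deg_avoid z by apply: sumr_ge0 => t _; apply: adjmx_ge0.
have common_weight_ge0 : 0 <= common_weight z.
  by apply: sumr_ge0 => t _; rewrite !mulr_ge0 ?adjmx_ge0.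
rewrite [\sum_t A z t](bigD1 u) //= -/(deg_avoid z) (adjmx_sym z u).
case: (codeg01 zu) => ->; first by rewrite mul0r addr_ge0 ?mulr_ge0 ?adjmx_ge0.
by case: (adjmx01 u z) => ->; lra.
Qed.

Lemma sum_deg_avoid : \sum_(z | z != u) deg_avoid z = 2 * (#|E|%:R - d).
Proof.
have deg_avoid_u : deg_avoid u = d by rewrite /d (bigD1 u) //= adjmx_diag add0r.
have : \sum_z deg_avoid z = 2 * #|E|%:R - d.
  have -> : d = \sum_t A t u by apply: eq_bigr => t _; apply: adjmx_sym.
  rewrite -sum_adjmx -sumrB; apply: eq_bigr => z _.
  by rewrite [in RHS](bigD1 u) //= addrC addrK.
rewrite (bigD1 u) //= deg_avoid_u; lra.
Qed.

Lemma sum_common_weight_le : \sum_z A u z * common_weight z <= weight.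
Proof.
have -> : \sum_z A u z * common_weight z = \sum_t A u t * (codeg t * y t).
  under eq_bigr do rewrite mulr_sumr.
  rewrite exchange_big; apply: eq_bigr => t _; rewrite /codeg mulr_suml mulr_sumr.
  by apply: eq_bigr => z _; rewrite (adjmx_sym z t); ring.
rewrite (bigD1 u) //= adjmx_diag mul0r add0r; apply: ler_sum => t _.
by rewrite ler_piMl ?mulr_ge0 ?codeg_ge0 ?adjmx_le1.
Qed.

Lemma rho_weight_le : rho * weight <= 2 * (#|E|%:R - d) + weight.
Proof.
rewrite -sum_deg_avoid.
apply: (@le_trans _ _ (\sum_(z | z != u) (deg_avoid z + A u z * common_weight z))).
  rewrite /weight mulr_sumr; apply: ler_sum => z zu.
  apply: le_trans (codeg_row_weight_le zu).
  by rewrite mulrCA ler_wpM2l ?codeg_ge0 ?y_subinv_row.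
rewrite big_split lerD2l /=; apply: le_trans sum_common_weight_le.
by rewrite [X in _ <= X](bigD1 u) //= adjmx_diag mul0r add0r.
Qed.

Lemma C4free_subinvariant_bound :
  (rho - 1) * (rho ^+ 2 - (degree E u)%:R) <= 2 * (#|E|%:R - (degree E u)%:R).
Proof.
rewrite -sum_adjmx_row -/d.
apply: (@le_trans _ _ ((rho - 1) * weight)).
  by rewrite ler_wpM2l ?subr_ge0 // lerBlDl sqr_rho_le.
by have := rho_weight_le; lra.
Qed.

End C4FreeWalks.

Lemma sqrt_le_lower (R : rcfType) (x c r : R) :
  c ^+ 2 < x -> Num.sqrt x <= r -> c < r /\ x <= r ^+ 2.
Proof.
move=> cx sx_le_r; have x_ge0 : 0 <= x by apply: le_trans (ltW cx); apply: sqr_ge0.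
have sx_ge0 := sqrtr_ge0 x; have := sqr_sqrtr x_ge0.
rewrite !expr2 in cx * => sx2; split; nra.
Qed.

Lemma spectral_degree_bound (R : realFieldType) (m k d r : R) :
  0 <= k -> 2 * k + 3 < r -> m - k <= r ^+ 2 ->
  (r - 1) * (r ^+ 2 - d) <= 2 * (m - d) -> m < d + k + 1.
Proof.
move=> k_ge0 r_gt mk_le bound; rewrite ltNge; apply/negP => m_ge.
have x_ge1 : 1 <= r ^+ 2 - d by lra.
have : (r - 3) * 1 <= (r - 3) * (r ^+ 2 - d) by rewrite ler_wpM2l ?subr_ge0; lra.
nra.
Qed.

Theorem theorem1p4 (R : realType) (k n : nat) (E : {set {set 'I_n}}) (rho : R) :
  simple_graph E ->
  (maxn ((k ^ 2 + 2 * k + 2) ^ 2 + k + 1) ((2 * k + 3) ^ 2 + k + 1) <= #|E|)%N ->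
  is_spectral_radius (adjmx R E) rho ->
  Num.sqrt (#|E|%:R - k%:R) <= rho ->
  contains_star E (#|E| - k) \/ contains_C4 E.
Proof.
move=> simpleE m_large [rho_eig _] sqrt_le_rho.
have k_ge0 : 0 <= k%:R :> R by rewrite ler0n.
have [rho_gt rho2_ge] : 2 * k%:R + 3 < rho /\ #|E|%:R - k%:R <= rho ^+ 2.
  apply: sqrt_le_lower sqrt_le_rho.
  rewrite ltrBrDr -[3]/(3%:R) -natrM -natrD -natrX -natrD ltr_nat.
  by apply: leq_trans m_large; rewrite -addn1 leq_maxr.
have rho_ge1 : 1 <= rho by lra.
have [y [u [y_bound yu y_subinv]]] :=
  nonneg_eigenvalue_subinvariant (@adjmx_ge0 R n E) (le_trans ler01 rho_ge1) rho_eig.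
have [C4 | noC4] := classic (contains_C4 E); [by right | left].
apply: (@contains_star_degree _ _ u).
have := C4free_subinvariant_bound simpleE noC4 y_bound yu rho_ge1 y_subinv.
move/(spectral_degree_bound k_ge0 rho_gt rho2_ge).
by rewrite -natrD natr1 ltr_nat ltnS leq_subLR addnC.
Qed.
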